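(* Let $0<\alpha\le\beta$ with $\alpha\le1$, and let $\gamma:[0,1]\to\mathbb{R}^n$ be an $(\alpha,\beta)$-bi-Hölder curve with constant $1\le C_\gamma<\infty$. Then there exist $C=C(\beta,C_\gamma)>0$ and $r_0=r_0(\beta,C_\gamma)>0$ such that for all $0<r<r_0$, $$\Lambda(B(\widehat\gamma,r),r)\ge C\, r^{\frac{\beta-1}{\beta}}.$$
   Context: A map $\gamma:[0,1]\to\mathbb{R}^n$ is an $(\alpha,\beta)$-bi-Hölder curve with constant $C_\gamma\ge1$ if $\frac1{C_\gamma}|x-y|^\beta\le|\gamma(x)-\gamma(y)|\le C_\gamma|x-y|^\alpha$ for all $x,y\in[0,1]$. $\widehat\gamma:=\gamma([0,1])$. For $A\subset\mathbb{R}^n$, $B(A,r):=\{x:\mathrm{dist}(x,A)\le r\}$. A rectifiable curve is the image of a Lipschitz map $[0,1]\to\mathbb{R}^n$. $\Lambda(E,r):=\inf\{\mathcal{H}^1(\Gamma):\Gamma \text{ a rectifiable curve with } B(\Gamma,r)\supset E\}$. *)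

From HB Require Import structures.
From mathcomp Require Import all_boot all_order all_algebra.
From mathcomp Require Import all_classical all_reals all_analysis.
Set Implicit Arguments. Unset Strict Implicit. Unset Printing Implicit Defensive.
Import Order.TTheory GRing.Theory Num.Theory.
Local Open Scope classical_set_scope.
Local Open Scope ring_scope.

Section Defs.
Variables (R : realType) (n : nat).
Notation V := 'rV[R]_n.

Definition edist (x y : V) : R := Num.sqrt (\sum_(i < n) (x ord0 i - y ord0 i) ^+ 2).

Definition I01 : set R := [set t | 0 <= t <= 1].

Definition biHolder (alpha beta Cg : R) (g : R -> V) : Prop :=
  forall x y, I01 x -> I01 y ->
    Cg^-1 * (`|x - y| `^ beta) <= edist (g x) (g y) /\
    edist (g x) (g y) <= Cg * (`|x - y| `^ alpha).

Definition distS (x : V) (A : set V) : R := inf [set edist x a | a in A].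

Definition Bnbhd (A : set V) (r : R) : set V := [set x | distS x A <= r].

(* extended-valued diameter (0 for the empty set, +oo if unbounded) *)
Definition ediam (U : set V) : \bar R :=
  ereal_sup ([set 0%E] `|` [set (edist x y)%:E | x in U & y in U]).

Definition H1delta (delta : R) (E : set V) : \bar R :=
  ereal_inf [set (\sum_(0 <= i <oo) ediam (U i))%E | U in
     [set U : nat -> set V | E `<=` \bigcup_i U i /\ forall i, (ediam (U i) <= delta%:E)%E]].

Definition H1 (E : set V) : \bar R :=
  ereal_sup [set H1delta delta E | delta in [set d : R | 0 < d]].

Definition rectifiable_curve (G : set V) : Prop :=
  exists (f : R -> V) (L : R),
    (forall x y, I01 x -> I01 y -> edist (f x) (f y) <= L * `|x - y|) /\
    G = f @` I01.

Definition Lambda (E : set V) (r : R) : \bar R :=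
  ereal_inf [set H1 G | G in [set G | rectifiable_curve G /\ E `<=` Bnbhd G r]].

End Defs.

(* Let Gamma be a rectifiable curve whose r-neighbourhood contains that of the
   trace of g.  Only the lower Hoelder bound of g is used: it makes the images of
   a grid of step d = (8 Cg r)^(1/beta) in [0, 1] pairwise 8r apart, so Gamma
   passes within 2r of each of these ~ 1/d points, at points p_i that are 4r
   apart.  For a cover of Gamma by sets of diameter <= r, the truncated distance
   min(|x - p_i|, r) maps the connected set Gamma onto [0, r], so the pieces
   meeting the ball B(p_i, r) have total diameter >= r/2, and each piece meets at
   most one of these balls.  Hence H1(Gamma) >= (r/2)/d = C r^((beta-1)/beta)
   for every such Gamma. *)

From Pilot Require Import Defs.
From HB Require Import structures.
From mathcomp Require Import all_boot all_order all_algebra.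
From mathcomp Require Import all_classical all_reals all_analysis.
From mathcomp Require Import ring lra.
Import Order.TTheory GRing.Theory Num.Theory numFieldNormedType.Exports.
Local Open Scope classical_set_scope.
Local Open Scope ring_scope.
Set Implicit Arguments. Unset Strict Implicit. Unset Printing Implicit Defensive.

(* Shadows [edist] of mathcomp-analysis (urysohn.v), an extended distance on pairs. *)
Local Notation edist := Defs.edist.

Section EuclideanDistance.
Variables (R : realType) (n : nat).
Notation V := 'rV[R]_n.

Lemma cauchy_schwarz_sum (a b : 'I_n -> R) :
  (\sum_i a i * b i) ^+ 2 <= (\sum_i a i ^+ 2) * (\sum_i b i ^+ 2).
Proof.
have lagrange : \sum_i \sum_j (a i * b j - a j * b i) ^+ 2 =
    2 * ((\sum_i a i ^+ 2) * (\sum_i b i ^+ 2) - (\sum_i a i * b i) ^+ 2).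
  have expand i j : (a i * b j - a j * b i) ^+ 2 =
      a i ^+ 2 * b j ^+ 2 + b i ^+ 2 * a j ^+ 2 - 2 * ((a i * b i) * (a j * b j)).
    by ring.
  under eq_bigr => i _ do under eq_bigr => j _ do rewrite expand.
  under eq_bigr => i _ do rewrite sumrB big_split /= -!mulr_sumr.
  by rewrite sumrB big_split /= -!mulr_sumr -!mulr_suml; ring.
have : 0 <= \sum_i \sum_j (a i * b j - a j * b i) ^+ 2.
  by apply: sumr_ge0 => i _; apply: sumr_ge0 => j _; exact: sqr_ge0.
by rewrite lagrange pmulr_rge0 // subr_ge0.
Qed.

Lemma sqrt_sum_sqrD_le (a b : 'I_n -> R) :
  Num.sqrt (\sum_i (a i + b i) ^+ 2) <=
  Num.sqrt (\sum_i a i ^+ 2) + Num.sqrt (\sum_i b i ^+ 2).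
Proof.
set A := \sum_i a i ^+ 2; set B := \sum_i b i ^+ 2.
have A0 : 0 <= A by apply: sumr_ge0 => i _; exact: sqr_ge0.
have B0 : 0 <= B by apply: sumr_ge0 => i _; exact: sqr_ge0.
have AB0 : 0 <= \sum_i (a i + b i) ^+ 2 by apply: sumr_ge0 => i _; exact: sqr_ge0.
rewrite -(@ler_pXn2r _ 2) ?nnegrE ?addr_ge0 ?sqrtr_ge0 //.
rewrite sqr_sqrtr // sqrrD !sqr_sqrtr //.
have -> : \sum_i (a i + b i) ^+ 2 = A + (\sum_i a i * b i) *+ 2 + B.
  under eq_bigr => i _ do rewrite sqrrD.
  by rewrite !big_split /= mulr2n.
rewrite lerD2r lerD2l lerMn2r /=.
apply: (le_trans (ler_norm _)).
rewrite -sqrtrM // -(sqrtr_sqr (\sum_i a i * b i)).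
by rewrite ler_sqrt ?cauchy_schwarz_sum // mulr_ge0.
Qed.

Lemma edist_nonneg (x y : V) : 0 <= edist x y.
Proof. exact: sqrtr_ge0. Qed.

Lemma edistxx (x : V) : edist x x = 0.
Proof. by rewrite /edist big1 ?sqrtr0 // => i _; rewrite subrr expr0n. Qed.

Lemma edistC (x y : V) : edist x y = edist y x.
Proof.
by rewrite /edist; congr Num.sqrt; apply: eq_bigr => i _; rewrite -sqrrN opprB.
Qed.

Lemma ler_edistD (x y z : V) : edist x z <= edist x y + edist y z.
Proof.
rewrite /edist; have -> : \sum_i (x ord0 i - z ord0 i) ^+ 2 =
    \sum_i ((x ord0 i - y ord0 i) + (y ord0 i - z ord0 i)) ^+ 2.
  by apply: eq_bigr => i _; rewrite addrA subrK.
exact: sqrt_sum_sqrD_le.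
Qed.

Lemma ler_dist_edist (x y z : V) : `|edist x z - edist y z| <= edist x y.
Proof.
have := ler_edistD x y z; have := ler_edistD y x z.
by rewrite (edistC y x) ler_norml => ? ?; apply/andP; split; lra.
Qed.

End EuclideanDistance.

Section RealLine.
Variable R : realType.
Implicit Types (r u v x y : R) (h : R -> R).

Lemma ler_dist_minr u v r : `|Num.min u r - Num.min v r| <= `|u - v|.
Proof.
have := ler_norm (u - v); rewrite distrC; have := ler_norm (v - u).
rewrite distrC ler_norml => ? ?.
by have [] := ltP u r; have [] := ltP v r; move=> ? ?; apply/andP; split; lra.
Qed.

Lemma ler_dist_maxr u v r : `|Num.max r u - Num.max r v| <= `|u - v|.
Proof.
have := ler_norm (u - v); rewrite distrC; have := ler_norm (v - u).
rewrite distrC ler_norml => ? ?.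
by have [] := ltP r u; have [] := ltP r v; move=> ? ?; apply/andP; split; lra.
Qed.

Definition clamp01 x : R := Num.max 0 (Num.min x 1).

Lemma clamp01_I01 x : I01 (clamp01 x).
Proof. by rewrite /I01 /clamp01 /= le_max lexx ge_max ler01 ge_min lexx orbT. Qed.

Lemma clamp01_id x : I01 x -> clamp01 x = x.
Proof.
by rewrite /I01 /clamp01 /= => /andP[x0 x1]; rewrite (min_idPl x1) (max_idPr x0).
Qed.

Lemma ler_dist_clamp01 x y : `|clamp01 x - clamp01 y| <= `|x - y|.
Proof. exact: le_trans (ler_dist_maxr _ _ _) (ler_dist_minr _ _ _). Qed.

Lemma lipschitz_real_continuous h (K : R) :
  (forall x y, `|h x - h y| <= K * `|x - y|) -> continuous h.
Proof.
move=> hK x; apply/cvgrPdist_le => e e0.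
have K1 : 0 < `|K| + 1 by rewrite ltr_wpDl.
apply/nbhs_ballP; exists (e / (`|K| + 1)) => /= [|y]; first by rewrite divr_gt0.
rewrite /ball /= ltr_pdivlMr // => xy_small.
apply: (le_trans (hK x y)); apply: ltW; apply: le_lt_trans xy_small.
rewrite mulrDr mulr1 mulrC ler_wpDr // ler_wpM2l //; exact: ler_norm.
Qed.

Lemma lipschitz_IVT h (K a b v : R) :
  (forall x y, `|h x - h y| <= K * `|x - y|) -> h a <= v <= h b ->
  exists c, h c = v.
Proof.
move=> hK /andP[hav hvb].
have hc A : {within A, continuous h}.
  exact/continuous_subspaceT/(lipschitz_real_continuous hK).
have [ab|/ltW ba] := leP a b.
  have [|c _ hcv] := @IVT _ h a b v ab (hc _); last by exists c.
  by rewrite ge_min hav le_max hvb orbT.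
have [|c _ hcv] := @IVT _ h b a v ba (hc _); last by exists c.
by rewrite ge_min hav orbT le_max hvb.
Qed.

(* The sets [W j] are enclosed in intervals of length [2 * w j]; compare Lebesgue measures. *)
Lemma itv_cover_width (r : R) (W : nat -> set R) (w : nat -> R) :
  0 <= r -> (forall j, 0 <= w j) ->
  [set x | 0 <= x <= r] `<=` \bigcup_j W j ->
  (forall j a b, W j a -> W j b -> a - b <= w j) ->
  ((r / 2)%:E <= \sum_(j <oo) (w j)%:E)%E.
Proof.
move=> r0 w0 cover Ww.
pose c j := xget 0 (W j).
pose I j : set R := `[c j - w j, c j + w j]%classic.
have WI j : W j `<=` I j.
  move=> a Wa; have cW : W j (c j) by apply: xgetPex; exists a.
  have := Ww j _ _ Wa cW; have := Ww j _ _ cW Wa.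
  by rewrite /I /= in_itv /= => ? ?; apply/andP; split; lra.
have -> : (r / 2)%:E = ((2^-1)%:E * r%:E)%E by rewrite -EFinM mulrC.
rewrite lee_pdivrMl ?ltr0n // -nneseriesZl; last by move=> i _; rewrite lee_fin.
have -> : r%:E = lebesgue_measure (`[0, r]%classic : set R).
  rewrite lebesgue_measure_itv /= lte_fin oppr0 adde0.
  by have [//|r_le0] := ltP 0 r; have -> : r = 0 by lra.
apply: (le_trans (@measure_sigma_subadditive _ _ _ lebesgue_measure _ I _ _ _)).
- by move=> j; exact: measurable_itv.
- exact: measurable_itv.
- move=> x /= /[dup]; rewrite in_itv /= => /cover [j _ Wx] _.
  by exists j => //; apply: WI.
apply: lee_nneseries => j _; first by move=> _; exact: measure_ge0.
rewrite /I /= lebesgue_measure_itv /= lte_fin -EFinM mulr_natl.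
case: ifP => _; last by rewrite lee_fin mulrn_wge0.
by rewrite -EFinD lee_fin; lra.
Qed.

Lemma sumr_if_at_most_one (N : nat) (P : nat -> Prop) (d : R) :
  0 <= d ->
  (forall i k, (i < N)%N -> (k < N)%N -> P i -> P k -> i = k) ->
  \sum_(0 <= i < N) (if `[< P i >] then d else 0) <= d.
Proof.
move=> d0 P_uniq.
have [[i0 [i0N Pi0]]|noP] := pselect (exists i, (i < N)%N /\ P i).
  rewrite (bigD1_seq i0) /= ?mem_index_iota ?iota_uniq // asboolT //.
  rewrite big1_seq ?addr0 // => i /andP[ii0]; rewrite mem_index_iota => /andP[_ iN].
  by case: asboolP => // Pi; rewrite (P_uniq i i0) ?eqxx in ii0.
rewrite big1_seq // => i; rewrite mem_index_iota => /andP[_ iN].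
by case: asboolP => // Pi; case: noP; exists i.
Qed.

End RealLine.

Section HausdorffPacking.
Variables (R : realType) (n : nat).
Notation V := 'rV[R]_n.
Local Notation trace f := (f @` @I01 R).
Implicit Types (U : set V) (p q : V) (r : R) (f : R -> V).

Definition lipschitz_on01 f (L : R) :=
  forall x y, I01 x -> I01 y -> edist (f x) (f y) <= L * `|x - y|.

Definition meets_ball U p r := exists2 x, U x & edist x p < r.

Lemma ediam_ge0 U : (0 <= ediam U)%E.
Proof. by apply: ereal_sup_ubound; left. Qed.

Lemma edist_le_ediam U (x y : V) : U x -> U y -> ((edist x y)%:E <= ediam U)%E.
Proof. by move=> Ux Uy; apply: ereal_sup_ubound; right; exists x => //; exists y. Qed.

Lemma meets_balls_edist_lt U p q r (d : R) :
  (forall x y, U x -> U y -> edist x y <= d) ->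
  meets_ball U p r -> meets_ball U q r -> edist p q < d + 2 * r.
Proof.
move=> dU [x Ux xp] [y Uy yq].
have := ler_edistD p x q; have := ler_edistD x y q; have := dU x y Ux Uy.
by rewrite (edistC p x); lra.
Qed.

(* Along a path from [p] to a point at distance [>= r], the truncated distance to
   [p] sweeps out [[0, r]]; a piece [U j] can only contribute to this sweep if it
   meets the open ball [B(p, r)], and then by at most its diameter. *)
Lemma ball_cover_width f (L r : R) p q (U : nat -> set V) (d : nat -> R) :
  0 < r -> lipschitz_on01 f L ->
  trace f p -> trace f q -> r <= edist q p ->
  trace f `<=` \bigcup_j U j ->
  (forall j x y, U j x -> U j y -> edist x y <= d j) -> (forall j, 0 <= d j) ->
  ((r / 2)%:E <=
    \sum_(j <oo) (if `[< meets_ball (U j) p r >] then d j else 0)%:E)%E.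
Proof.
move=> r0 Lf [a Ia fa] [b Ib fb] qp_far cover dU d0.
pose phi x := Num.min (edist x p) r.
apply: (@itv_cover_width _ r (fun j => phi @` (U j `&` trace f))).
- exact: ltW.
- by move=> j; case: asboolP.
- move=> c /andP[c0 cr].
  pose h t := phi (f (clamp01 t)).
  have h_lip x y : `|h x - h y| <= `|L| * `|x - y|.
    apply: le_trans (ler_dist_minr _ _ _) _; apply: le_trans (ler_dist_edist _ _ _) _.
    apply: le_trans (Lf _ _ (clamp01_I01 x) (clamp01_I01 y)) _.
    apply: le_trans (ler_wpM2r (normr_ge0 _) (ler_norm L)) _.
    by rewrite ler_wpM2l ?ler_dist_clamp01.
  have [t htc] : exists t, h t = c.
    apply: (@lipschitz_IVT _ h `|L| a b) => //.
    by rewrite /h /phi !clamp01_id // fa fb edistxx (min_idPl (ltW r0)) (min_idPr qp_far) c0.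
  have Gt : trace f (f (clamp01 t)) by exists (clamp01 t); first exact: clamp01_I01.
  have [j _ Uj] := cover _ Gt.
  by exists j => //; exists (f (clamp01 t)).
- move=> j _ _ [x [Ux _] <-] [y [Uy _] <-].
  case: asboolP => [_|far_j].
    apply: le_trans (ler_norm _) _; apply: le_trans (ler_dist_minr _ _ _) _.
    by apply: le_trans (ler_dist_edist _ _ _) _; exact: dU.
  have phi_r z : U j z -> phi z = r.
    move=> Uz; apply/min_idPr; rewrite leNgt; apply/negP => zp.
    by apply: far_j; exists z.
  by rewrite !phi_r // subrr.
Qed.

Lemma H1delta_packing_lb f (L r : R) (N : nat) (p : nat -> V) :
  0 < r -> (1 < N)%N -> lipschitz_on01 f L ->
  (forall i, (i < N)%N -> trace f (p i)) ->
  (forall i k, (i < N)%N -> (k < N)%N -> i != k -> 4 * r <= edist (p i) (p k)) ->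
  (((r / 2) *+ N)%:E <= H1delta r (trace f))%E.
Proof.
move=> r0 N2 Lf pG psep.
apply: le_ereal_inf_tmp => _ [U [cover dU] <-].
pose d j := fine (ediam (U j)).
have dE j : (d j)%:E = ediam (U j).
  apply: fineK; rewrite ge0_fin_numE ?ediam_ge0 //.
  exact: le_lt_trans (dU j) (ltry r).
have d0 j : 0 <= d j by rewrite -lee_fin dE ediam_ge0.
have dr j : d j <= r by rewrite -lee_fin dE.
have d_diam j x y : U j x -> U j y -> edist x y <= d j.
  by move=> Ux Uy; rewrite -lee_fin dE; exact: edist_le_ediam.
pose w i j := if `[< meets_ball (U j) (p i) r >] then d j else 0.
have w0 i j : 0 <= w i j by rewrite /w; case: asboolP.
have sum_over_pieces i : (i < N)%N -> ((r / 2)%:E <= \sum_(j <oo) (w i j)%:E)%E.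
  move=> iN; pose k := if i == 0%N then 1%N else 0%N.
  have kN : (k < N)%N by rewrite /k; case: ifP => // _; exact: ltnW.
  have ki : k != i by rewrite /k; case: (eqVneq i 0%N) => [->|i0] //; rewrite eq_sym.
  apply: (ball_cover_width (U := U) (d := d) r0 Lf (pG i iN) (pG k kN)) => //.
  by have := psep k i kN iN ki; lra.
have sum_over_points j : (\sum_(0 <= i < N) (w i j)%:E <= (d j)%:E)%E.
  rewrite sumEFin lee_fin; apply: sumr_if_at_most_one => // i k iN kN mi mk.
  apply/eqP; apply: contraT => ik.
  have := meets_balls_edist_lt (d_diam j) mi mk; have := psep i k iN kN ik.
  by have := dr j; lra.
have -> : ((r / 2) *+ N)%:E = (\sum_(0 <= i < N) (r / 2)%:E)%E.
  by rewrite sumEFin sumr_const_nat subn0.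
apply: (@le_trans _ _ (\sum_(0 <= i < N) \sum_(j <oo) (w i j)%:E)%E).
  rewrite !big_seq; apply: lee_sum => i; rewrite mem_index_iota => /andP[_ iN].
  exact: sum_over_pieces.
rewrite -nneseries_sum_nat; last by move=> i j; rewrite lee_fin.
under [X in (_ <= X)%E]eq_eseriesr => j _ do rewrite -dE.
apply: lee_nneseries => // j _ _; apply: sume_ge0 => i _; exact: w0.
Qed.

Lemma H1_packing_lb f (L r : R) (N : nat) (p : nat -> V) :
  0 < r -> (1 < N)%N -> lipschitz_on01 f L ->
  (forall i, (i < N)%N -> trace f (p i)) ->
  (forall i k, (i < N)%N -> (k < N)%N -> i != k -> 4 * r <= edist (p i) (p k)) ->
  (((r / 2) *+ N)%:E <= H1 (trace f))%E.
Proof.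
move=> r0 N2 Lf pG psep; apply: le_trans (H1delta_packing_lb r0 N2 Lf pG psep) _.
by apply: ereal_sup_ubound; exists r.
Qed.

End HausdorffPacking.

Section PackingLambda.
Variables (R : realType) (n : nat).
Notation V := 'rV[R]_n.
Implicit Types (A : set V) (r s : R).

Lemma sub_Bnbhd A r : 0 <= r -> A `<=` Bnbhd A r.
Proof.
move=> r0 x Ax; rewrite /Bnbhd /distS /=; apply: le_trans r0.
apply: ge_inf; first by exists 0 => _ [a _ <-]; exact: edist_nonneg.
by exists x => //; exact: edistxx.
Qed.

Lemma Bnbhd_near A r s (x : V) :
  A !=set0 -> r < s -> Bnbhd A r x -> exists2 a, A a & edist x a < s.
Proof.
move=> [a0 Aa0] rs Bx.
have [_ [a Aa <-] xa] : exists2 y, [set edist x a | a in A] y & y < s.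
  by apply: inf_lt; [exists (edist x a0); exists a0 | exact: le_lt_trans Bx rs].
by exists a.
Qed.

(* A rectifiable curve whose [r]-neighbourhood contains [8r]-separated points
   passes within [2r] of each of them, at [4r]-separated points of its trace. *)
Lemma Lambda_packing_lb A r (N : nat) (q : nat -> V) :
  0 < r -> (1 < N)%N -> (forall i, (i < N)%N -> A (q i)) ->
  (forall i k, (i < N)%N -> (k < N)%N -> i != k -> 8 * r <= edist (q i) (q k)) ->
  (((r / 2) *+ N)%:E <= Lambda (Bnbhd A r) r)%E.
Proof.
move=> r0 N2 qA qsep.
apply: le_ereal_inf_tmp => _ [_ [[f [L [Lf ->]] cover] <-]].
have G0 : (f @` @I01 R) !=set0.
  by exists (f 0); exists 0 => //; rewrite /I01 /= lexx ler01.
pose near i a := (f @` @I01 R) a /\ edist (q i) a < 2 * r.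
have near_ex i : (i < N)%N -> exists a, near i a.
  move=> iN; have qB := cover _ (sub_Bnbhd (ltW r0) (qA i iN)).
  have [|a Ga qa] := Bnbhd_near (s := 2 * r) G0 _ qB; first lra.
  by exists a.
pose p i := xget (q i) (near i).
have pP i : (i < N)%N -> near i (p i) by move=> /near_ex; exact: xgetPex.
apply: (H1_packing_lb (p := p) r0 N2 Lf) => [i /pP[]//|i k iN kN ik].
have [_ qpi] := pP i iN; have [_ qpk] := pP k kN; have := qsep i k iN kN ik.
have := ler_edistD (q i) (p i) (q k); have := ler_edistD (p i) (p k) (q k).
by rewrite (edistC (p k)); lra.
Qed.

End PackingLambda.

Section BiHolderGrid.
Variable R : realType.

Definition grid (M i : nat) : R := i%:R / M%:R.

Lemma grid_I01 (M i : nat) : (0 < M)%N -> (i <= M)%N -> I01 (grid M i).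
Proof.
move=> M0 iM; rewrite /I01 /grid /= divr_ge0 ?ler0n //=.
by rewrite ler_pdivrMr ?ltr0n // mul1r ler_nat.
Qed.

Lemma grid_sep (M i k : nat) : (0 < M)%N -> i != k -> M%:R^-1 <= `|grid M i - grid M k|.
Proof.
move=> M0 ik; rewrite /grid -mulrBl normrM normfV normr_nat ler_pMl ?invr_gt0 ?ltr0n //.
have [ilk|kli|/eqP] := ltngtP i k; last by rewrite (negPf ik).
  by rewrite distrC -natrB ?normr_nat ?ler1n ?subn_gt0 // ltnW.
by rewrite -natrB ?normr_nat ?ler1n ?subn_gt0 // ltnW.
Qed.

Lemma exists_inv_nat_bracket (d : R) : 0 < d < 1 ->
  exists M : nat, [/\ (0 < M)%N, d <= M%:R^-1 & d^-1 <= M.+1%:R].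
Proof.
move=> /andP[d0 d1]; exists (Num.truncn d^-1).
have /andP[Md dM] : (Num.truncn d^-1)%:R <= d^-1 < (Num.truncn d^-1).+1%:R.
  by apply: truncn_itv; rewrite invr_ge0 ltW.
have M0 : (0 < Num.truncn d^-1)%N.
  by rewrite -ltnS -(ltr_nat R) (lt_trans _ dM) // invf_gt1.
split=> //; last exact: ltW.
by rewrite -[leLHS]invrK lef_pV2 ?posrE ?invr_gt0 ?ltr0n.
Qed.

Lemma biHolder_sep n (alpha beta Cg d x y : R) (g : R -> 'rV[R]_n) :
  0 <= beta -> 0 <= Cg -> 0 <= d -> biHolder alpha beta Cg g ->
  I01 x -> I01 y -> d <= `|x - y| -> Cg^-1 * d `^ beta <= edist (g x) (g y).
Proof.
move=> b0 Cg0 d0 bh Ix Iy dxy; apply: le_trans (proj1 (bh x y Ix Iy)).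
by rewrite ler_wpM2l ?invr_ge0 // ge0_ler_powR ?nnegrE.
Qed.

Lemma biHolder_grid_sep n (alpha beta Cg s : R) (g : R -> 'rV[R]_n) :
  0 < beta -> 0 < Cg -> 0 < s < 1 -> biHolder alpha beta Cg g ->
  exists M : nat, [/\ (0 < M)%N, s `^ (- beta^-1) <= M.+1%:R &
    forall i k, (i <= M)%N -> (k <= M)%N -> i != k ->
      Cg^-1 * s <= edist (g (grid M i)) (g (grid M k))].
Proof.
move=> b0 Cg0 /andP[s0 s1] bh; pose d := s `^ beta^-1.
have d01 : 0 < d < 1.
  rewrite powR_gt0 //=; have := @gt0_ltr_powR R beta^-1 _ s 1.
  by rewrite powR1 !nnegrE invr_gt0 ler01; apply; rewrite ?ltW.
have [M [M0 dM Md]] := exists_inv_nat_bracket d01.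
exists M; split=> [//||i k iM kM ik]; first by rewrite powRN.
have d_beta : d `^ beta = s by rewrite -powRrM mulVf ?gt_eqF // powRr1 // ltW.
rewrite -[X in _ * X <= _]d_beta.
apply: (biHolder_sep _ _ _ bh (grid_I01 M0 iM) (grid_I01 M0 kM)).
- exact: ltW.
- exact: ltW.
- by case/andP: d01 => /ltW.
- exact: le_trans dM (grid_sep M0 ik).
Qed.

Lemma powR_rescale (K r beta : R) : 0 < K -> 0 < r -> 0 < beta ->
  K `^ (- beta^-1) * r `^ ((beta - 1) / beta) = r * (K * r) `^ (- beta^-1).
Proof.
move=> K0 r0 b0; rewrite powRM ?ltW // mulrCA; congr (_ * _).
have -> : (beta - 1) / beta = 1 + - beta^-1 by field; rewrite gt_eqF.
by rewrite powRD ?(gt_eqF r0) ?implybT // powRr1 // ltW.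
Qed.

End BiHolderGrid.

Theorem lemma3p9 (R : realType) (beta Cg : R) :
  0 < beta -> 1 <= Cg ->
  exists C r0 : R, 0 < C /\ 0 < r0 /\
    forall (n : nat) (alpha : R) (g : R -> 'rV[R]_n),
      0 < alpha -> alpha <= beta -> alpha <= 1 ->
      biHolder alpha beta Cg g ->
      forall r : R, 0 < r -> r < r0 ->
        ((C * r `^ ((beta - 1) / beta))%:E <= Lambda (Bnbhd (g @` @I01 R) r) r)%E.
Proof.
move=> b0 Cg1; have Cg0 : 0 < Cg by lra.
pose K := 8 * Cg; have K0 : 0 < K by rewrite /K; lra.
exists (K `^ (- beta^-1) / 2), K^-1; split; first by rewrite divr_gt0 // powR_gt0.
split=> [|n alpha g _ _ _ bh r r0 rK]; first by rewrite invr_gt0.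
have Kr : 0 < K * r < 1.
  by rewrite mulr_gt0 //=; move: rK; rewrite -(ltr_pM2l K0) mulfV ?gt_eqF.
have [M [M0 MK sep]] := biHolder_grid_sep b0 Cg0 Kr bh.
have g_grid i : (i < M.+1)%N -> (g @` @I01 R) (g (grid R M i)).
  by move=> iM; exists (grid R M i); first exact: grid_I01.
have g_sep i k : (i < M.+1)%N -> (k < M.+1)%N -> i != k ->
    8 * r <= edist (g (grid R M i)) (g (grid R M k)).
  have -> : 8 * r = Cg^-1 * (K * r) by rewrite /K -mulrA mulrCA mulKf ?lt0r_neq0.
  exact: sep.
apply: le_trans _ (Lambda_packing_lb (N := M.+1) r0 M0 g_grid g_sep).
rewrite lee_fin mulrAC powR_rescale // mulrAC.
rewrite -[X in _ <= X]mulr_natr; apply: ler_wpM2l MK.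
by rewrite divr_ge0 // ltW.
Qed.
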